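(* For every normalized Hausdorff moment sequence $\mathbf a=(a_n)_{n\ge0}$ we have $\lim_{n\to\infty}T^{\circ n}(\mathbf a)=\mathbf m$ coordinatewise, i.e. $\lim_{n\to\infty}(T^{\circ n}(\mathbf a))_k=m_k$ for every $k\ge0$. Equivalently, for every probability measure $\tau$ on $[0,1]$, $\widehat T^{\circ n}(\tau)\to\mu$ weakly.
   Context: Let $\mathbf m=(m_n)_{n\ge0}$ be the unique sequence of positive reals with $m_0=1$ and $(1+m_1+\cdots+m_n)\,m_n=1$ for $n\ge1$; it is a Hausdorff moment sequence with representing probability measure $\mu$ on $[0,1]$. A normalized Hausdorff moment sequence is $\mathbf a=(a_n)_n$ with $a_n=\int_0^1t^n\,d\nu(t)$ for a probability measure $\nu$ on $[0,1]$. The map $T$ is $T(\mathbf a)_n=1/(a_0+a_1+\cdots+a_n)$, $n\ge0$; it maps normalized Hausdorff moment sequences to normalized Hausdorff moment sequences, and $\widehat T$ denotes the induced map on probability measures on $[0,1]$. $T^{\circ n}$ is the $n$-fold iterate. *)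

From HB Require Import structures.
From mathcomp Require Import all_boot all_order all_algebra.
From mathcomp Require Import all_classical all_reals all_analysis.
Set Implicit Arguments. Unset Strict Implicit. Unset Printing Implicit Defensive.
Import Order.TTheory GRing.Theory Num.Theory.
Import numFieldNormedType.Exports.
Local Open Scope classical_set_scope.
Local Open Scope ring_scope.

Definition hmoment (R : realType) (nu : {measure set R -> \bar R}) (n : nat) : R :=
  Rintegral nu `[0, 1] (fun t : R => t ^+ n).

Definition Tmap (R : realType) (a : nat -> R) : nat -> R :=
  fun n => (\sum_(i < n.+1) a i)^-1.

From HB Require Import structures.
From mathcomp Require Import all_boot all_order all_algebra.
From mathcomp Require Import all_classical all_reals all_analysis.
From mathcomp Require Import ring lra.
Import Order.TTheory GRing.Theory Num.Theory.
Import numFieldNormedType.Exports.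
Local Open Scope classical_set_scope.
Local Open Scope ring_scope.

(* By induction on k, the partial sums
   S_n = a^(n)_0 + ... + a^(n)_k of the iterates a^(n) = T^n(a) converge to
   s = m_0 + ... + m_k.  As m_(k+1) solves (s + y) y = 1 and S_n >= 1,
     |a^(n+1)_(k+1) - m_(k+1)| <= m_(k+1) (|a^(n)_(k+1) - m_(k+1)| + |S_n - s|),
   a perturbed contraction of ratio m_(k+1) < 1, so a^(n)_(k+1) -> m_(k+1). *)

Lemma dist_inv_fixpoint {R : realFieldType} (s m s' y : R) :
  (s + m) * m = 1 -> 0 <= m -> 1 <= s' -> 0 <= y ->
  `|(s' + y)^-1 - m| <= m * (`|y - m| + `|s' - s|).
Proof.
move=> fix_m m_ge0 s'_ge1 y_ge0.
have sy_gt0 : 0 < s' + y by lra.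
have -> : (s' + y)^-1 - m = (s' + y)^-1 * (m * ((s + m) - (s' + y))).
  rewrite mulrBr [m * _]mulrC fix_m mulrBr mulr1 mulrCA mulVf ?mulr1 //.
  exact: lt0r_neq0.
rewrite normrM ger0_norm ?invr_ge0 ?(ltW sy_gt0) //.
apply: le_trans (_ : _ <= `|m * (s + m - (s' + y))|) _.
  by rewrite ler_piMl // invf_le1 //; lra.
rewrite normrM ger0_norm // ler_wpM2l //.
have -> : s + m - (s' + y) = (m - y) + (s - s') by ring.
by rewrite [`|y - m|]distrC [`|s' - s|]distrC ler_normD.
Qed.

Lemma cvg0_contraction {R : realType} {q : R} {e d : R^nat} :
  0 <= q -> q < 1 -> (forall n, 0 <= e n) -> d @ \oo --> 0 ->
  (forall n, e n.+1 <= q * (e n + d n)) -> e @ \oo --> 0.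
Proof.
move=> q0 q1 e0 d0 eS; apply/cvgr0Pnorm_lt => eps eps0.
set c := eps / 2; have c0 : 0 < c by rewrite divr_gt0.
have [N _ dN] : \forall n \near \oo, `|d n| < (1 - q) * c.
  by apply: cvgr0_norm_lt d0 _ _; rewrite mulr_gt0 // subr_gt0.
(* once q d_n <= (1 - q) c, the excess of e_n over the fixed point c of
   t |-> q t + (1 - q) c decays geometrically *)
have eN j : e (N + j)%N <= c + q ^+ j * e N.
  elim: j => [|j IHj]; first by rewrite addn0 expr0 mul1r lerDr ltW.
  have dj : q * d (N + j)%N <= (1 - q) * c.
    have := dN _ (leq_addr j N); have := ler_norm (d (N + j)%N).
    have := normr_ge0 (d (N + j)%N); nra.
  rewrite addnS (le_trans (eS _)) // exprSr mulrDr.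
  have := ler_wpM2l q0 IHj; nra.
have [M _ qM] : \forall j \near \oo, `|q ^+ j * e N| < c.
  have qe0 : (fun j => q ^+ j * e N) @ \oo --> 0.
    by rewrite -(mul0r (e N)); apply: cvgMr_tmp; apply: cvg_expr; rewrite ger0_norm.
  exact: cvgr0_norm_lt qe0 _ c0.
exists (N + M)%N => // n /= NMn.
have Nn : (N <= n)%N by apply: leq_trans NMn; apply: leq_addr.
have qMn : `|q ^+ (n - N) * e N| < c by apply: qM; rewrite /= leq_subRL.
have := eN (n - N)%N; rewrite subnKC // ger0_norm ?e0 //.
have := ler_norm (q ^+ (n - N) * e N); rewrite (splitr eps) -/c; lra.
Qed.

Lemma sum_ge1 {R : numDomainType} {b : nat -> R} k :
  b 0%N = 1 -> (forall i, 0 <= b i) -> 1 <= \sum_(i < k.+1) b i.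
Proof. by move=> b0 b_ge0; rewrite big_ord_recl b0 lerDl sumr_ge0. Qed.

Lemma Tmap0 {R : realType} (a : nat -> R) : a 0%N = 1 -> Tmap a 0 = 1.
Proof. by move=> a0; rewrite /Tmap big_ord1 a0 invr1. Qed.

Lemma Tmap_ge0 {R : realType} (a : nat -> R) :
  (forall i, 0 <= a i) -> forall i, 0 <= Tmap a i.
Proof. by move=> a_ge0 i; rewrite invr_ge0 sumr_ge0. Qed.

Lemma TmapS {R : realType} (a : nat -> R) k :
  Tmap a k.+1 = (\sum_(i < k.+1) a i + a k.+1)^-1.
Proof. by rewrite /Tmap big_ord_recr. Qed.

Section IteratedTmap.
Context {R : realType} {m a : nat -> R}.
Hypotheses (m0 : m 0%N = 1) (m_gt0 : forall n, 0 < m n)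
  (m_fix : forall n, (1 <= n)%N -> (\sum_(i < n.+1) m i) * m n = 1).
Hypotheses (a0 : a 0%N = 1) (a_ge0 : forall i, 0 <= a i).

Let x n := iter n (@Tmap R) a.

Lemma iter_Tmap0 n : x n 0%N = 1.
Proof. by elim: n => //= n IHn; rewrite Tmap0. Qed.

Lemma iter_Tmap_ge0 n i : 0 <= x n i.
Proof. by elim: n i => //= n IHn; apply: Tmap_ge0. Qed.

Lemma cvg_iter_TmapS k :
  (fun n => \sum_(i < k.+1) x n i) @ \oo --> \sum_(i < k.+1) m i ->
  (fun n => x n k.+1) @ \oo --> m k.+1.
Proof.
move=> cvg_sum.
have fix_m : (\sum_(i < k.+1) m i + m k.+1) * m k.+1 = 1.
  by have := @m_fix k.+1 (ltn0Sn k); rewrite big_ord_recr.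
have m_lt1 : m k.+1 < 1.
  have := sum_ge1 k m0 (fun i => ltW (m_gt0 i)); have := m_gt0 k.+1; nra.
apply/subr_cvg0/norm_cvg0P.
pose d n := `|\sum_(i < k.+1) x n i - \sum_(i < k.+1) m i|.
apply: (cvg0_contraction (d := d) (ltW (m_gt0 _)) m_lt1 (fun n => normr_ge0 _)).
  exact/norm_cvg0P/subr_cvg0.
move=> n; rewrite [x n.+1]/= TmapS.
apply: dist_inv_fixpoint (ltW (m_gt0 _)) _ (iter_Tmap_ge0 _ _) => //.
exact: sum_ge1 k (iter_Tmap0 n) (iter_Tmap_ge0 n).
Qed.

Lemma cvg_iter_Tmap_sum k :
  (fun n => \sum_(i < k.+1) x n i) @ \oo --> \sum_(i < k.+1) m i.
Proof.
elim: k => [|k IHk].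
  rewrite big_ord1 m0; under eq_fun do rewrite big_ord1 iter_Tmap0.
  exact: cvg_cst.
have sum_recr (b : nat -> R) :
    \sum_(i < k.+2) b i = \sum_(i < k.+1) b i + b k.+1 by rewrite big_ord_recr.
rewrite sum_recr; under eq_fun do rewrite sum_recr.
exact: cvgD IHk (cvg_iter_TmapS k IHk).
Qed.

Lemma cvg_iter_Tmap k : (fun n => x n k) @ \oo --> m k.
Proof.
case: k => [|k]; last exact: cvg_iter_TmapS k (cvg_iter_Tmap_sum k).
by rewrite m0; under eq_fun do rewrite iter_Tmap0; exact: cvg_cst.
Qed.

End IteratedTmap.

Lemma hmoment0 {R : realType} {nu : {measure set R -> \bar R}} :
  nu `[0, 1]%classic = 1%E -> hmoment nu 0 = 1.
Proof.
move=> nu01; rewrite /hmoment; under eq_Rintegral do rewrite expr0.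
by rewrite Rintegral_cst ?mul1r ?nu01.
Qed.

Lemma hmoment_ge0 {R : realType} (nu : {measure set R -> \bar R}) n :
  0 <= hmoment nu n.
Proof.
apply: Rintegral_ge0 => t.
by rewrite /= in_itv /= => /andP[t_ge0 _]; rewrite exprn_ge0.
Qed.

Theorem theorem2p3 (R : realType) (m : nat -> R)
  (m0 : m 0%N = 1)
  (mpos : forall n, 0 < m n)
  (mrec : forall n, (1 <= n)%N -> (\sum_(i < n.+1) m i) * m n = 1)
  (nu : probability R R)
  (nu01 : nu `[0, 1]%classic = 1%E) :
  forall k : nat,
    (fun n : nat => iter n (@Tmap R) (hmoment nu) k) @ \oo --> m k.
Proof. exact: cvg_iter_Tmap m0 mpos mrec (hmoment0 nu01) (hmoment_ge0 nu). Qed.
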